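(* Every integer partition $\lambda$ satisfies at least one of the following: (1) $\lambda$ is novel, or $\lambda=c\mu$ for some integer $c\ge 2$ and some novel partition $\mu$; (2) there is a novel partition $\mu$ of strictly smaller length than $\lambda$ with $\lambda\Rightarrow\mu$; (3) $\lambda^{\perp B}=\emptyset$.
   Context: An integer partition is $\lambda=(\lambda_1,\dots,\lambda_k)$ with integers $\lambda_1\ge\dots\ge\lambda_k\ge 1$; $k$ is its length; $c\lambda=(c\lambda_1,\dots,c\lambda_k)$. For $v\in\mathbb{Z}^k$ let $v^{\perp B}=\{x\in\{-1,1\}^k: v\cdot x=0\}$; $\lambda^{\perp B}$ is this set for $(\lambda_1,\dots,\lambda_k)$. $V_\lambda\subset\mathbb{Z}^k$ is the set of vectors obtained from $(\lambda_1,\dots,\lambda_k)$ by permuting coordinates and changing signs of some coordinates, with first coordinate positive. For $I\subset\{1,\dots,m\}$, $\mathrm{Proj}_I:\{-1,1\}^m\to\{-1,1\}^{|I|}$ keeps the coordinates indexed by $I$. Reduction: for partitions $\mu$ of length $m$ and $\lambda$ of length $k\le m$, $\mu\Rightarrow\lambda$ iff there exist $I\subset\{1,\dots,m\}$, $|I|=k$, and $v\in V_\lambda$ with $\mathrm{Proj}_I(\mu^{\perp B})\subset v^{\perp B}$. $\mu$ strictly reduces to $\lambda$ iff $\mu\Rightarrow\lambda$ and not $\lambda\Rightarrow\mu$. Partitions $\lambda,\mu$ of the same length are equivalent iff there is $w\in V_\mu$ with $\lambda^{\perp B}=w^{\perp B}$. A partition $\lambda$ is novel iff $\lambda^{\perp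 B}\neq\emptyset$, $\lambda$ strictly reduces to no partition, and $\lambda$ is lexicographically smallest among partitions equivalent to it. *)

From mathcomp Require Import all_boot all_order all_algebra.
Set Implicit Arguments. Unset Strict Implicit. Unset Printing Implicit Defensive.
Import GRing.Theory Num.Theory.

Definition is_partition (l : seq nat) : Prop :=
  (0 < size l)%N /\ sorted geq l /\ all (fun a => 0 < a)%N l.

Definition sign_vec (k : nat) (x : seq int) : Prop :=
  size x = k /\ all (fun a : int => (a == 1%R) || (a == (-1)%R)) x.

Definition dotz (v x : seq int) : int :=
  (\sum_(i < size v) v`_i * x`_i)%R.

Definition perpB (v : seq int) (x : seq int) : Prop :=
  sign_vec (size v) x /\ dotz v x = 0%R.

Definition lamPerpB (lam : seq nat) (x : seq int) : Prop :=
  perpB [seq Posz a | a <- lam] x.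

Definition inV (lam : seq nat) (v : seq int) : Prop :=
  perm_eq [seq absz a | a <- v] lam /\ (0 < head 0 v)%R.

(* mu => lam. The subset I of {1..m} is encoded by its indicator b : bitseq,
   and Proj_I is mask b. *)
Definition reduces (mu lam : seq nat) : Prop :=
  exists b : seq bool, size b = size mu /\ count id b = size lam /\
    exists v, inV lam v /\ forall x, lamPerpB mu x -> perpB v (mask b x).

Definition strictly_reduces (mu lam : seq nat) : Prop :=
  reduces mu lam /\ ~ reduces lam mu.

Definition equivalent (lam mu : seq nat) : Prop :=
  size lam = size mu /\
  exists w, inV mu w /\ forall x, lamPerpB lam x <-> perpB w x.

Fixpoint lex_le (s t : seq nat) : bool :=
  match s, t with
  | [::], _ => true
  | _ :: _, [::] => false
  | a :: s', b :: t' => (a < b)%N || ((a == b) && lex_le s' t')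
  end.

Definition novel (lam : seq nat) : Prop :=
  is_partition lam /\
  (exists x, lamPerpB lam x) /\
  (forall mu, is_partition mu -> ~ strictly_reduces lam mu) /\
  (forall mu, is_partition mu -> equivalent lam mu -> lex_le lam mu).

Definition scale_part (c : nat) (mu : seq nat) : seq nat := [seq c * a | a <- mu]%N.

(* The proof is a strong induction on the length of λ.  If λ^⊥B = ∅ we are in
   case (3).  If λ reduces to a shorter partition ν, the induction hypothesis
   for ν gives case (2), using transitivity of reduction and the fact that c·μ
   and μ have the same ⊥B set (case (3) for ν is excluded, as reductions map
   λ^⊥B into ν^⊥B).  Otherwise λ is "reduction-minimal", and the key fact is
   that every integer functional vanishing on λ^⊥B is proportional to λ: a
   combination with λ vanishing at one coordinate but not everywhere would,
   through its nonzero coefficients, reduce λ to a shorter partition.  Writing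
   λ = g·μ with g the gcd of the parts, μ is still reduction-minimal, and the
   key fact forces every partition of the same length that μ reduces to, or is
   equivalent to, to be a multiple of μ; so μ is novel and λ is in case (1). *)

From mathcomp Require Import all_boot all_order all_algebra.
From mathcomp Require Import ring lra zify.
From Stdlib Require Import Classical.
Set Implicit Arguments. Unset Strict Implicit. Unset Printing Implicit Defensive.
Import Order.TTheory GRing.Theory Num.Theory.
Local Open Scope ring_scope.

Lemma nth_Posz (l : seq nat) i : nth 0 (map Posz l) i = (nth 0%N l i)%:Z.
Proof.
case: (ltnP i (size l)) => hi; first by rewrite (nth_map 0%N).
by rewrite !nth_default ?size_map.
Qed.

Lemma lamPerpBE l x : lamPerpB l x <->
  sign_vec (size l) x /\ \sum_(i < size l) (nth 0%N l i)%:Z * x`_i = 0.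
Proof.
rewrite /lamPerpB /perpB /dotz size_map.
by under eq_bigr => i _ do rewrite nth_Posz.
Qed.

Lemma sign_vec_nth k x i : sign_vec k x -> (i < k)%N -> x`_i = 1 \/ x`_i = -1.
Proof.
move=> [hs /all_nthP hall] hi.
by move: (hall 0 i); rewrite hs => /(_ hi) /orP[/eqP->|/eqP->]; [left|right].
Qed.

Lemma sign_vecP k x : size x = k ->
  (forall i, (i < k)%N -> x`_i = 1 \/ x`_i = -1) -> sign_vec k x.
Proof.
move=> hs h; split => //; apply/(all_nthP 0) => i hi.
by move: (h i); rewrite -hs => /(_ hi) [->|->]; rewrite eqxx ?orbT.
Qed.

Lemma sign_mul (a b : int) : (a = 1 \/ a = -1) -> (b = 1 \/ b = -1) ->
  a * b = 1 \/ a * b = -1.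
Proof. by case=> ->; case=> ->; rewrite ?mulN1r ?mul1r ?opprK; auto. Qed.

Lemma part_gt0 lam i : is_partition lam -> (i < size lam)%N -> (0 < nth 0%N lam i)%N.
Proof. by move=> [_ [_ hpos]]; apply: (all_nthP 0%N hpos). Qed.

Definition annihilates (lam : seq nat) (u : nat -> int) : Prop :=
  forall x, lamPerpB lam x -> \sum_(j < size lam) u j * x`_j = 0.

Lemma perpB_opp v y : perpB v y -> perpB (map -%R v) y.
Proof.
move=> [hs hd]; split; first by rewrite size_map.
transitivity (- dotz v y); last by rewrite hd oppr0.
by rewrite /dotz size_map -sumrN; apply: eq_bigr => i _; rewrite (nth_map 0) // mulNr.
Qed.

Lemma inV_normalize nu v : head 0 v != 0 -> perm_eq (map absz v) nu ->
  exists w, inV nu w /\ forall y, perpB v y -> perpB w y.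
Proof.
move=> hh hp; case: (ltrP 0 (head 0 v)) => hsgn; first by exists v.
exists (map -%R v); split; last exact: perpB_opp.
split; first by rewrite -map_comp (eq_map (g := absz)) // => a /=; rewrite abszN.
by case: v hh hsgn {hp} => [|a v] //= ha hle; rewrite oppr_gt0 lt_neqAle ha hle.
Qed.

(* An annihilating functional whose nonzero coefficients are, in absolute
   value, a permutation of ν yields a reduction λ ⇒ ν: project onto the
   support of the functional. *)
Lemma reduces_of_annihilator lam nu (u : nat -> int) :
  (0 < size nu)%N ->
  perm_eq nu [seq absz (u j) | j <- iota 0 (size lam) & u j != 0] ->
  annihilates lam u -> reduces lam nu.
Proof.
move=> hn hp hu; set m := size lam.
set J := [seq j <- iota 0 m | u j != 0]; set b := [seq u j != 0 | j <- iota 0 m].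
have hJ : mask b (iota 0 m) = J by rewrite /J filter_mask.
have hsJ : size J = size nu by rewrite (perm_size hp) size_map.
have hJm q : (q < size J)%N -> (nth 0%N J q < m)%N.
  by move=> hq; have := mem_nth 0%N hq; rewrite mem_filter mem_iota => /andP[_ /andP[]].
have hmask (x : seq int) : size x = m -> mask b x = map (nth 0 x) J.
  by move=> hx; rewrite -hJ map_mask -[in LHS](mkseq_nth 0 x) hx.
set v := map u J.
have hsv : size v = size J by rewrite size_map.
have hhead : head 0 v != 0.
  rewrite /v; case hJe: J => [|j J'] /=; first by move: hn; rewrite -hsJ hJe.
  have : j \in J by rewrite hJe mem_head.
  by rewrite mem_filter => /andP[].
have [w [hw hvw]] : exists w, inV nu w /\ forall y, perpB v y -> perpB w y.
  by apply: inV_normalize hhead _; rewrite -map_comp perm_sym.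
exists b; split; first by rewrite size_map size_iota.
split; first by rewrite -hsJ -hJ size_mask // size_map size_iota.
exists w; split => // x /[dup] hx /lamPerpBE [hsx _]; apply: hvw.
have hxm : size x = m by case: hsx.
split.
  apply: sign_vecP; first by rewrite hmask // !size_map.
  move=> q; rewrite hsv => hq; rewrite hmask // (nth_map 0%N) //.
  exact: sign_vec_nth hsx (hJm q hq).
rewrite /dotz hmask // hsv; transitivity (\sum_(j < m) u j * x`_j); last exact: hu.
transitivity (\sum_(j <- J) u j * x`_j).
  rewrite (big_nth 0%N) big_mkord; apply: eq_bigr => q _.
  by rewrite (nth_map 0%N) // (nth_map 0%N) // -hsv.
rewrite /J big_filter -(big_mkord xpredT (fun j => u j * x`_j)) /index_iota subn0 big_mkcond.
by apply: eq_bigr => j _; case: eqP => [->|]; rewrite ?mul0r.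
Qed.

(* This is reduction with the
   projection and the signed permutation merged into one index map, which
   makes composition straightforward. *)
Definition embeds (lam nu : seq nat) : Prop := exists (f : nat -> nat) (s : nat -> int),
  (forall i, (i < size nu)%N -> (f i < size lam)%N) /\
  (forall i j, (i < size nu)%N -> (j < size nu)%N -> f i = f j -> i = j) /\
  (forall i, s i = 1 \/ s i = -1) /\
  forall x, lamPerpB lam x ->
    \sum_(i < size nu) s i * (nth 0%N nu i)%:Z * x`_(f i) = 0.

Lemma embed_perp (lam nu : seq nat) (f : nat -> nat) (s : nat -> int) (x : seq int) :
  (forall i, (i < size nu)%N -> (f i < size lam)%N) ->
  (forall i, s i = 1 \/ s i = -1) ->
  lamPerpB lam x ->
  \sum_(i < size nu) s i * (nth 0%N nu i)%:Z * x`_(f i) = 0 ->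
  lamPerpB nu (mkseq (fun i => s i * x`_(f i)) (size nu)).
Proof.
move=> hf hs /lamPerpBE [hx _] hsum; apply/lamPerpBE; split.
  apply: sign_vecP; first by rewrite size_mkseq.
  move=> i hi; rewrite nth_mkseq //; apply: sign_mul => //.
  exact: sign_vec_nth hx (hf i hi).
rewrite -[RHS]hsum; apply: eq_bigr => i _; rewrite nth_mkseq //.
by rewrite mulrA [_ * s i]mulrC.
Qed.

Lemma embeds_trans a b c : embeds a b -> embeds b c -> embeds a c.
Proof.
move=> [f [s [hf [hi [hs h]]]]] [g [t [hg [hj [ht h']]]]].
exists (fun j => f (g j)), (fun j => t j * s (g j)); split; [|split; [|split]].
- by move=> i hi'; apply/hf/hg.
- by move=> i j hi1 hj1 /hi => /(_ (hg _ hi1) (hg _ hj1)) /hj; apply.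
- by move=> i; apply: sign_mul.
move=> x hx; rewrite -[RHS](h' _ (embed_perp hf hs hx (h x hx))).
apply: eq_bigr => i _; rewrite nth_mkseq ?hg //.
by rewrite -!mulrA; congr (_ * _); rewrite mulrCA.
Qed.

(* Every reduction gives a signed embedding: read off the coordinates of the
   mask and the permutation matching |v| with ν. *)
Lemma reduces_embeds lam nu : reduces lam nu -> embeds lam nu.
Proof.
move=> [b [hb [hc [v [[hp hv] h]]]]].
set m := size lam; set k := size nu.
have hsv : size v = k by rewrite /k -(perm_size hp) size_map.
have := hp; rewrite perm_sym => /(perm_iotaP 0%N) [Is hIs hnu].
set J := mask b (iota 0 m).
have hsJ : size J = k by rewrite size_mask ?size_iota // hc.
have hsIs : size Is = k by rewrite (perm_size hIs) size_iota size_map hsv.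
have hIsk i : (i < k)%N -> (nth 0%N Is i < k)%N.
  move=> hi; have : nth 0%N Is i \in Is by rewrite mem_nth // hsIs.
  by rewrite (perm_mem hIs) mem_iota size_map hsv.
have hJm q : (q < k)%N -> (nth 0%N J q < m)%N.
  move=> hq; have : nth 0%N J q \in J by rewrite mem_nth // hsJ.
  by move/mem_mask; rewrite mem_iota.
have hnth i : (i < k)%N -> nth 0%N nu i = absz (v`_(nth 0%N Is i)).
  by move=> hi; rewrite hnu (nth_map 0%N) ?hsIs // (nth_map 0) // hsv; exact: hIsk.
exists (fun i => nth 0%N J (nth 0%N Is i)),
  (fun i => if v`_(nth 0%N Is i) < 0 then -1 else 1).
split; [|split; [|split]].
- by move=> i hi; apply/hJm/hIsk.
- have hJu : uniq J := mask_uniq (iota_uniq 0 m) b.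
  move=> i j hi hj /eqP; rewrite nth_uniq ?hsJ ?hIsk //.
  move/eqP/eqP; rewrite nth_uniq ?hsIs //; first by move/eqP.
  by rewrite (perm_uniq hIs) iota_uniq.
- by move=> i; case: ifP; [right|left].
move=> x /[dup] hx /lamPerpBE [[hsx _] _]; have [_ hd] := h x hx.
have hmx : mask b x = map (nth 0 x) J by rewrite /J map_mask -[in LHS](mkseq_nth 0 x) hsx.
rewrite -[RHS]hd /dotz hsv.
transitivity (\sum_(p <- Is) v`_p * (mask b x)`_p).
  rewrite (big_nth 0%N) big_mkord hsIs; apply: eq_bigr => i _.
  rewrite hnth // hmx (nth_map 0%N) ?hsJ ?hIsk // abszE.
  case: ifP => ha; first by rewrite ltr0_norm // mulN1r opprK.
  by rewrite ger0_norm ?mul1r // leNgt ha.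
by rewrite (perm_big _ hIs) size_map hsv -(big_mkord xpredT (fun p => v`_p * (mask b x)`_p)) /index_iota subn0.
Qed.

Section EmbeddingCoefficients.
Variables (lam nu : seq nat) (f : nat -> nat) (s : nat -> int).
Hypothesis f_range : forall i, (i < size nu)%N -> (f i < size lam)%N.
Hypothesis f_inj : forall i j, (i < size nu)%N -> (j < size nu)%N -> f i = f j -> i = j.
Hypothesis s_sign : forall i, s i = 1 \/ s i = -1.

Definition embed_coef (j : nat) : int :=
  \sum_(i < size nu) (f i == j)%:R * (s i * (nth 0%N nu i)%:Z).

Lemma embed_coef_image i : (i < size nu)%N -> embed_coef (f i) = s i * (nth 0%N nu i)%:Z.
Proof.
move=> hi; rewrite /embed_coef (bigD1 (Ordinal hi)) //= eqxx mul1r big1 ?addr0 // => i' hne.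
case: eqP => [e|]; last by rewrite mul0r.
by move: hne; rewrite -val_eqE /= (f_inj (ltn_ord i') hi e) eqxx.
Qed.

Lemma embed_coef_out j : (forall i, (i < size nu)%N -> f i != j) -> embed_coef j = 0.
Proof. by move=> hj; rewrite /embed_coef big1 // => i _; rewrite (negbTE (hj i _)) ?mul0r. Qed.

Lemma embed_coef_support : is_partition nu ->
  perm_eq nu [seq absz (embed_coef j) | j <- iota 0 (size lam) & embed_coef j != 0].
Proof.
move=> hnu; set k := size nu.
have hsupp : perm_eq [seq j <- iota 0 (size lam) | embed_coef j != 0] (map f (iota 0 k)).
  apply: uniq_perm; first exact: (filter_uniq _ (iota_uniq _ _)).
    by rewrite map_inj_in_uniq ?iota_uniq // => a b; rewrite !mem_iota /=; apply: f_inj.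
  move=> j; rewrite mem_filter mem_iota /=; apply/idP/idP.
    move=> /andP[hj _]; case: (boolP [exists i : 'I_k, f i == j]).
      by move=> /existsP [i /eqP <-]; apply/mapP; exists (val i); rewrite // mem_iota /=.
    move=> /existsPn hne; rewrite embed_coef_out ?eqxx // in hj.
    by move=> i hik; exact: (hne (Ordinal hik)).
  move=> /mapP [i]; rewrite mem_iota /= => hik ->.
  have hnz : (nth 0%N nu i)%:Z != 0 by rewrite eqz_nat -lt0n part_gt0.
  by rewrite embed_coef_image // f_range // andbT; case: (s_sign i) => ->;
    rewrite ?mul1r ?mulN1r ?oppr_eq0.
have e : [seq absz (embed_coef j) | j <- map f (iota 0 k)] = nu.
  rewrite -map_comp -[RHS](mkseq_nth 0%N nu); apply/eq_in_map => i.
  rewrite mem_iota /= => hik; rewrite embed_coef_image // abszM.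
  by case: (s_sign i) => ->; rewrite /= ?mul1n.
by rewrite -[X in perm_eq X _]e perm_sym; exact: perm_map hsupp.
Qed.

Lemma embed_coef_sum (x : seq int) :
  \sum_(j < size lam) embed_coef j * x`_j =
  \sum_(i < size nu) s i * (nth 0%N nu i)%:Z * x`_(f i).
Proof.
under eq_bigr => j _ do rewrite /embed_coef mulr_suml.
rewrite exchange_big /=; apply: eq_bigr => i _.
rewrite (bigD1 (Ordinal (f_range (ltn_ord i)))) //= eqxx mul1r big1 ?addr0 // => j hne.
case: eqP => [e|_]; last by rewrite !mul0r.
by move: hne; rewrite -val_eqE /= e eqxx.
Qed.

End EmbeddingCoefficients.

Lemma embeds_reduces lam nu : is_partition nu -> embeds lam nu -> reduces lam nu.
Proof.
move=> hnu [f [s [hf [hi [hs h]]]]].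
apply: (reduces_of_annihilator (u := embed_coef nu f s)); first by case: hnu.
  exact: embed_coef_support.
by move=> x hx; rewrite embed_coef_sum //; exact: h.
Qed.

Lemma reduces_trans a b c : is_partition c -> reduces a b -> reduces b c -> reduces a c.
Proof.
move=> hc hab hbc; apply: embeds_reduces hc _.
exact: embeds_trans (reduces_embeds hab) (reduces_embeds hbc).
Qed.

Lemma reduces_perp lam nu x : reduces lam nu -> lamPerpB lam x -> exists z, lamPerpB nu z.
Proof.
move=> /reduces_embeds [f [s [hf [_ [hs h]]]]] hx.
by eexists; apply: embed_perp hf hs hx (h x hx).
Qed.

(* Between partitions of equal length, inclusion of ⊥B sets is a reduction
   (take the full mask and v = b itself). *)
Lemma reduces_of_perp_sub a b : is_partition b -> size a = size b ->
  (forall x, lamPerpB a x -> lamPerpB b x) -> reduces a b.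
Proof.
move=> hb hs h; exists (nseq (size a) true); split; first by rewrite size_nseq.
split; first by rewrite count_nseq mul1n.
exists (map Posz b); split.
  split; first by rewrite -map_comp map_id_in.
  by rewrite -nth0 nth_Posz ltz_nat part_gt0 //; case: hb.
move=> x hx; rewrite mask_true; first exact: h.
by move: hx => /lamPerpBE [[-> _] _].
Qed.

Lemma perp_scale c mu x : (0 < c)%N -> lamPerpB (scale_part c mu) x <-> lamPerpB mu x.
Proof.
move=> hc; rewrite !lamPerpBE size_map.
have -> : \sum_(i < size mu) (nth 0%N (scale_part c mu) i)%:Z * x`_i =
    c%:Z * \sum_(i < size mu) (nth 0%N mu i)%:Z * x`_i.
  by rewrite mulr_sumr; apply: eq_bigr => i _; rewrite (nth_map 0%N) // PoszM mulrA.
split => -[h1 h2]; split => //; last by rewrite h2 mulr0.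
by move/eqP: h2; rewrite mulf_eq0 eqz_nat gtn_eqF //= => /eqP.
Qed.

Lemma scale_part1 s : scale_part 1 s = s.
Proof. by rewrite /scale_part (eq_map (g := id)) ?map_id // => a; rewrite mul1n. Qed.

Lemma lex_le_scale c s : (0 < c)%N -> lex_le s (scale_part c s).
Proof.
move=> hc; elim: s => //= a s IH.
case: (ltnP a (c * a)) => //= h.
have -> : (a == c * a)%N by apply/eqP/anti_leq; rewrite h leq_pmull.
exact: IH.
Qed.

Definition gcd_parts (s : seq nat) : nat := foldr gcdn 0%N s.

Lemma gcd_parts_dvd s a : a \in s -> (gcd_parts s %| a)%N.
Proof.
elim: s => //= b s IH; rewrite inE => /orP[/eqP->|/IH h]; first exact: dvdn_gcdl.
exact: dvdn_trans (dvdn_gcdr _ _) h.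
Qed.

Lemma gcd_parts_scale c s : gcd_parts (scale_part c s) = (c * gcd_parts s)%N.
Proof. by elim: s => [|a s IH] /=; [rewrite muln0 | rewrite IH muln_gcdr]. Qed.

Lemma dvdn_mul_gcd_parts d n s : (forall a, a \in s -> d %| n * a)%N -> (d %| n * gcd_parts s)%N.
Proof.
elim: s => [|a s IH] h /=; first by rewrite muln0 dvdn0.
rewrite muln_gcdr dvdn_gcd h ?mem_head //=.
by apply: IH => b hb; apply: h; rewrite inE hb orbT.
Qed.

Lemma primitive_part lam : is_partition lam ->
  exists g mu, [/\ (0 < g)%N, is_partition mu, gcd_parts mu = 1%N & lam = scale_part g mu].
Proof.
move=> hlam; set g := gcd_parts lam.
have hgd i : (i < size lam)%N -> (g %| nth 0%N lam i)%N.
  by move=> hi; apply/gcd_parts_dvd/mem_nth.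
have hg : (0 < g)%N.
  have [hn _] := hlam; rewrite lt0n; apply/negP => /eqP g0.
  by have := hgd 0%N hn; rewrite g0 dvd0n => /eqP e; have := part_gt0 hlam hn; rewrite e.
set mu := map (fun a => a %/ g)%N lam.
have hmu : lam = scale_part g mu.
  rewrite /scale_part /mu -map_comp -[LHS]map_id; apply/eq_in_map => a ha /=.
  by rewrite mulnC divnK //; apply: gcd_parts_dvd.
exists g, mu; split => //; last first.
  by apply/eqP; rewrite -(eqn_pmul2l hg) muln1 -gcd_parts_scale -hmu.
have [hn [hs _]] := hlam.
split; first by rewrite size_map.
split.
  apply/(sortedP 0%N) => i; rewrite size_map => hi.
  rewrite !(nth_map 0%N) //; last exact: ltnW.
  by rewrite /geq /= leq_div2r //; have := (sortedP 0%N hs) i hi.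
apply/(all_nthP 0%N) => i; rewrite size_map => hi; rewrite (nth_map 0%N) // divn_gt0 //.
by apply: dvdn_leq; [apply: part_gt0 | apply: hgd].
Qed.

Definition proportional (a b : seq nat) : Prop :=
  size a = size b /\ forall i j, (i < size b)%N -> (j < size b)%N ->
    (nth 0%N a i * nth 0%N b j = nth 0%N a j * nth 0%N b i)%N.

Lemma proportional_perp a b x : is_partition a -> proportional a b ->
  lamPerpB a x -> lamPerpB b x.
Proof.
move=> ha [hs hab] /lamPerpBE [hsx hd]; apply/lamPerpBE; split; first by rewrite -hs.
have hn : (0 < size a)%N by case: ha.
have : (nth 0%N a 0)%:Z * \sum_(i < size b) (nth 0%N b i)%:Z * x`_i = 0.
  transitivity ((nth 0%N b 0)%:Z * \sum_(i < size a) (nth 0%N a i)%:Z * x`_i);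
    last by rewrite hd mulr0.
  rewrite !mulr_sumr hs; apply: eq_bigr => i _.
  by rewrite !mulrA -!PoszM hab -?hs // mulnC.
by move/eqP; rewrite mulf_eq0 eqz_nat (gtn_eqF (part_gt0 ha hn)) => /eqP.
Qed.

Lemma proportional_scale a b : is_partition a -> is_partition b -> gcd_parts b = 1%N ->
  proportional a b -> exists2 c, (0 < c)%N & a = scale_part c b.
Proof.
move=> ha hb hg [hs hab].
have hn : (0 < size b)%N by case: hb.
have hb0 := part_gt0 hb hn.
have hd : (nth 0%N b 0 %| nth 0%N a 0)%N.
  rewrite -[nth _ a _]muln1 -hg; apply: dvdn_mul_gcd_parts => _ /(nthP 0%N) [j hj <-].
  by rewrite hab // dvdn_mull.
set c := (nth 0%N a 0 %/ nth 0%N b 0)%N.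
have ha0 : nth 0%N a 0 = (c * nth 0%N b 0)%N by rewrite divnK.
exists c.
  have : (0 < nth 0%N a 0)%N by apply: part_gt0; rewrite ?hs.
  by rewrite ha0 muln_gt0 => /andP[].
apply: (eq_from_nth (x0 := 0%N)); first by rewrite size_map hs.
move=> j; rewrite hs => hj; rewrite (nth_map 0%N) //.
by apply/eqP; rewrite -(eqn_pmul2r hb0) -(hab 0%N j) // ha0 mulnAC.
Qed.

Definition reduction_minimal (lam : seq nat) : Prop :=
  ~ exists nu, is_partition nu /\ (size nu < size lam)%N /\ reduces lam nu.

(* Minimality passes from c·μ to μ, since c·μ ⇒ μ. *)
Lemma reduction_minimal_scale c mu : (0 < c)%N -> is_partition mu ->
  reduction_minimal (scale_part c mu) -> reduction_minimal mu.
Proof.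
move=> hc hmu hmin [nu [hnu [hlt hred]]]; apply: hmin; exists nu; split => //.
split; first by rewrite size_map.
apply: reduces_trans hnu _ hred; apply: reduces_of_perp_sub hmu (size_map _ _) _.
by move=> x /perp_scale; apply.
Qed.

(* An annihilating functional vanishing at some but not all coordinates gives
   a reduction to the (sorted) partition of its nonzero coefficients, which is
   shorter than λ. *)
Lemma shorter_reduction_of_annihilator lam (u : nat -> int) i0 j :
  (i0 < size lam)%N -> (j < size lam)%N -> u i0 = 0 -> u j != 0 ->
  annihilates lam u ->
  exists nu, is_partition nu /\ (size nu < size lam)%N /\ reduces lam nu.
Proof.
move=> hi0 hj hu0 huj hu.
set w := [seq absz (u j) | j <- iota 0 (size lam) & u j != 0].
have hw0 : (0 < size w)%N.
  by rewrite size_map size_filter -has_count; apply/hasP; exists j; rewrite ?mem_iota.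
exists (sort geq w); split; [split; [|split]|split].
- by rewrite size_sort.
- by apply: sort_sorted => a b; rewrite /geq /= leq_total.
- rewrite all_sort; apply/allP => a /mapP [j'].
  by rewrite mem_filter => /andP[hne _] ->; rewrite absz_gt0.
- rewrite size_sort size_map size_filter.
  have h1 : (0 < count (predC (fun j => u j != 0)) (iota 0 (size lam)))%N.
    by rewrite -has_count; apply/hasP; exists i0; rewrite ?mem_iota //= hu0 eqxx.
  have hsplit := count_predC (fun j => u j != 0) (iota 0 (size lam)).
  rewrite size_iota in hsplit.
  by rewrite -[X in (_ < X)%N]hsplit -[X in (X < _)%N]addn0 ltn_add2l.
apply: (reduces_of_annihilator (u := u)) => //; first by rewrite size_sort.
by rewrite perm_sort perm_refl.
Qed.

(* Key fact: for reduction-minimal λ, every functional vanishing on λ^⊥B is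
   proportional to λ.  Indeed u = v_0·λ - λ_0·v vanishes at 0, hence
   everywhere by the previous lemma. *)
Lemma annihilator_proportional lam (v : nat -> int) :
  is_partition lam -> reduction_minimal lam -> annihilates lam v ->
  forall i j, (i < size lam)%N -> (j < size lam)%N ->
  v i * (nth 0%N lam j)%:Z = v j * (nth 0%N lam i)%:Z.
Proof.
move=> hlam hmin hv.
have hn : (0 < size lam)%N by case: hlam.
pose L i := (nth 0%N lam i)%:Z.
have hL0 : L 0%N != 0 by rewrite eqz_nat -lt0n part_gt0.
pose u j := v 0%N * L j - v j * L 0%N.
have hu : annihilates lam u.
  move=> x /[dup] hx /lamPerpBE [_ hd].
  transitivity (v 0%N * \sum_(k < size lam) L k * x`_k -
                L 0%N * \sum_(k < size lam) v k * x`_k).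
    by rewrite !mulr_sumr -sumrB; apply: eq_bigr => k _; rewrite /u; ring.
  by rewrite hd hv // !mulr0 subrr.
have e k : (k < size lam)%N -> v k * L 0%N = v 0%N * L k.
  move=> hk; apply/eqP; rewrite eq_sym -subr_eq0; case: eqP => // /eqP hne.
  by case: hmin; apply: (shorter_reduction_of_annihilator hn hk _ hne hu); rewrite /u subrr.
move=> i j hi hj.
have : (v i * L j - v j * L i) * L 0%N = 0.
  transitivity (L j * (v i * L 0%N) - L i * (v j * L 0%N)); first by ring.
  by rewrite !e //; ring.
by move/eqP; rewrite mulf_eq0 (negbTE hL0) orbF subr_eq0 => /eqP.
Qed.

(* If v ∈ V_ν is orthogonal to μ^⊥B with μ reduction-minimal, then v is a
   positive multiple of μ; being sorted like μ, |v| equals ν, so ν is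
   proportional to μ. *)
Lemma proportional_of_functional mu nu v : is_partition mu -> reduction_minimal mu ->
  is_partition nu -> inV nu v -> size nu = size mu ->
  (forall x, lamPerpB mu x -> perpB v x) -> proportional nu mu.
Proof.
move=> hmu hmin [_ [hsn _]] [hp hh] hsz hv.
have hsv : size v = size mu by rewrite -hsz -(perm_size hp) size_map.
have hann : annihilates mu (fun i => v`_i) by move=> x /hv [_]; rewrite /dotz hsv.
have hprop : forall i j, (i < size mu)%N -> (j < size mu)%N ->
    v`_i * (nth 0%N mu j)%:Z = v`_j * (nth 0%N mu i)%:Z.
  exact: annihilator_proportional hmu hmin hann.
set m := size mu; have hn : (0 < m)%N by case: hmu.
have hL i : (i < m)%N -> 0 < (nth 0%N mu i)%:Z by move=> hi; rewrite ltz_nat part_gt0.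
have hvpos j : (j < m)%N -> 0 < v`_j.
  move=> hj; have e := hprop 0%N j hn hj; have hv0 : 0 < v`_0 by rewrite nth0.
  have := hL j hj; have := hL 0%N hn; nra.
have hsorted : sorted geq (map absz v).
  have [_ [hs _]] := hmu.
  apply/(sortedP 0%N) => i; rewrite size_map hsv => hi.
  have hmui := (sortedP 0%N hs) i hi.
  rewrite !(nth_map 0) ?hsv //; last exact: ltnW.
  rewrite /geq /= -lez_nat !abszE !gtr0_norm ?hvpos //; last exact: ltnW.
  move: hmui; rewrite /geq /= -lez_nat => hmui.
  have e1 := hprop 0%N i hn (ltnW hi); have e2 := hprop 0%N i.+1 hn hi.
  have := hvpos 0%N hn; have := hL 0%N hn; nra.
have heq : nu = map absz v.
  apply: (sorted_eq _ _ hsn hsorted); last by rewrite perm_sym.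
    by move=> b a c h1 h2; exact: leq_trans h2 h1.
  by move=> a b /andP[h1 h2]; apply/anti_leq; rewrite /geq /= in h1 h2; rewrite h1 h2.
split => // i j hi hj; rewrite heq !(nth_map 0) ?hsv //.
apply/eqP; rewrite -eqz_nat !PoszM !abszE !gtr0_norm ?hvpos //; apply/eqP; exact: hprop.
Qed.

(* A reduction-minimal partition reduces strictly to nothing: a reduction to
   a partition of equal length is to a proportional one, which reduces back. *)
Lemma minimal_no_strict_reduction mu nu : is_partition mu -> reduction_minimal mu ->
  is_partition nu -> ~ strictly_reduces mu nu.
Proof.
move=> hmu hmin hnu [hred []]; move: (hred) => [b [hb [hc [v [hv hvx]]]]].
case: (ltngtP (size nu) (size mu)) => hsz.
- by case: hmin; exists nu.
- by move: (count_size id b); rewrite hb hc leqNgt hsz.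
have hball : b = nseq (size mu) true.
  have hall : all id b by rewrite all_count hc hb hsz.
  by rewrite -hb; apply/all_pred1P; apply: sub_all hall; case.
have hprop : proportional nu mu.
  apply: proportional_of_functional hmu hmin hnu hv hsz _ => x hx.
  have hsx : size x = size mu by move: hx => /lamPerpBE [[-> _] _].
  by have := hvx x hx; rewrite hball mask_true ?hsx.
apply: reduces_of_perp_sub hmu hsz _ => x; exact: proportional_perp hnu hprop.
Qed.

(* A reduction-minimal partition with coprime parts is lexicographically
   least in its equivalence class, all of whose members are its multiples. *)
Lemma minimal_lex_least mu nu : is_partition mu -> reduction_minimal mu ->
  gcd_parts mu = 1%N -> is_partition nu -> equivalent mu nu -> lex_le mu nu.
Proof.
move=> hmu hmin hg hnu [hsz [w [hw hwx]]].
have hprop : proportional nu mu.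
  by apply: proportional_of_functional hmu hmin hnu hw (esym hsz) _ => x /hwx.
by have [c hc ->] := proportional_scale hnu hmu hg hprop; exact: lex_le_scale.
Qed.

Lemma novel_of_primitive mu : is_partition mu -> (exists x, lamPerpB mu x) ->
  reduction_minimal mu -> gcd_parts mu = 1%N -> novel mu.
Proof.
move=> hmu hx hmin hg; do 2!split => //; split=> nu hnu.
  exact: minimal_no_strict_reduction.
exact: minimal_lex_least.
Qed.

Theorem mainTheorem4 (lam : seq nat) :
  is_partition lam ->
  (novel lam \/ exists (c : nat) (mu : seq nat),
       (2 <= c)%N /\ novel mu /\ lam = scale_part c mu) \/
  (exists mu, novel mu /\ (size mu < size lam)%N /\ reduces lam mu) \/
  (forall x, ~ lamPerpB lam x).
Proof.
have [n] := ubnP (size lam); elim: n lam => // n IH lam /ltnSE hsz hlam.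
have [[x hx]|hnone] := classic (exists x, lamPerpB lam x); last first.
  by right; right => x hx; apply: hnone; exists x.
have [hmin|/NNPP [nu [hnu [hlt hred]]]] := classic (reduction_minimal lam).
  left; have [g [mu [hg hmu hg1 hlam_eq]]] := primitive_part hlam.
  have hperp y : lamPerpB lam y <-> lamPerpB mu y by rewrite hlam_eq; exact: perp_scale.
  have hnov : novel mu.
    apply: novel_of_primitive => //; first by exists x; apply/hperp.
    by apply: reduction_minimal_scale hg hmu _; rewrite -hlam_eq.
  case: (leqP g 1) => hg2; last by right; exists g, mu.
  by left; rewrite hlam_eq (_ : g = 1%N) ?scale_part1 //; lia.
right; left; have [z hz] := reduces_perp hred hx.
have [[hnov|[c [mu [hc [hnov hnu_eq]]]]]|[[mu [hnov [hlt' hr]]]|hempty]] :=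
  IH nu (leq_trans hlt hsz) hnu.
- by exists nu.
- have hsmu : size nu = size mu by rewrite hnu_eq size_map.
  exists mu; split => //; split; first by rewrite -hsmu.
  apply: reduces_trans (proj1 hnov) hred (reduces_of_perp_sub (proj1 hnov) hsmu _).
  by move=> y; rewrite hnu_eq perp_scale //; lia.
- exists mu; split => //; split; first exact: ltn_trans hlt' hlt.
  exact: reduces_trans (proj1 hnov) hred hr.
- by case: (hempty z).
Qed.
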